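(* In the setting where $\hat U,\tilde U:(0,1]\to GL_n(\mathbb F)$ ($\mathbb F\in\{\mathbb R,\mathbb C\}$) are continuous, $\hat U$ contracts the algebra with structure constants $c^k_{ij}$ to the algebra with structure constants $\hat c^k_{ij}$, and $\tilde U$ contracts the latter to the algebra with structure constants $\tilde c^k_{ij}$: if each function $\tilde g^{k'i''j''}_{i'j'k''}(\tilde\varepsilon)=(\tilde U_{\tilde\varepsilon})^{i''}_{i'}(\tilde U_{\tilde\varepsilon})^{j''}_{j'}(\tilde U^{-1}_{\tilde\varepsilon})^{k'}_{k''}$ is bounded as $\tilde\varepsilon\to0^+$, then $U_{\hat\varepsilon,\tilde\varepsilon}=\hat U_{\hat\varepsilon}\tilde U_{\tilde\varepsilon}$ gives a two-parametric contraction, i.e. $\lim_{(\hat\varepsilon,\tilde\varepsilon)\to(0^+,0^+)}(U)^i_{i'}(U)^j_{j'}(U^{-1})^{k'}_kc^k_{ij}=\tilde c^{k'}_{i'j'}$ for all indices.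
   Context: A continuous $U:(0,1]\to GL_n(\mathbb F)$ contracts the algebra with structure constants $c^k_{ij}$ (in a fixed basis) to the algebra with structure constants $c'^{k'}_{i'j'}$ if $\lim_{\varepsilon\to0^+}(U_\varepsilon)^i_{i'}(U_\varepsilon)^j_{j'}(U^{-1}_\varepsilon)^{k'}_kc^k_{ij}=c'^{k'}_{i'j'}$ for all indices (summation over repeated indices). *)

From HB Require Import structures.
From mathcomp Require Import all_boot all_order all_algebra.
From mathcomp Require Import all_classical all_reals all_analysis.
From mathcomp Require Export complex.
Set Implicit Arguments. Unset Strict Implicit. Unset Printing Implicit Defensive.
Import Order.TTheory GRing.Theory Num.Theory.
Import numFieldNormedType.Exports.
Local Open Scope classical_set_scope.
Local Open Scope ring_scope.

(* Structure constants c i j k stand for c^k_{ij}.  A matrix U : 'M_n has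
   entries U i i' = U^i_{i'} (upper index = row, lower index = column). *)

Definition transf (F : numFieldType) (n : nat) (c : 'I_n -> 'I_n -> 'I_n -> F)
    (U : 'M[F]_n) (i' j' k' : 'I_n) : F :=
  \sum_(i < n) \sum_(j < n) \sum_(k < n)
     U i i' * U j j' * (invmx U) k' k * c i j k.

Definition contracts (R : realType) (F : numFieldType) (n : nat)
    (U : R -> 'M[F]_n) (c c' : 'I_n -> 'I_n -> 'I_n -> F) : Prop :=
  {within `]0, 1]%classic, continuous U} /\
  (forall e : R, 0 < e <= 1 -> U e \in unitmx) /\
  (forall i' j' k' : 'I_n,
      transf c (U e) i' j' k' @[e --> 0^'+] --> c' i' j' k').

Definition g_bounded (R : realType) (F : numFieldType) (n : nat)
    (U : R -> 'M[F]_n) : Prop :=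
  forall i' j' k'' k' i'' j'' : 'I_n,
    exists M : F, \forall e \near 0^'+,
      `| U e i'' i' * U e j'' j' * (invmx (U e)) k' k'' | <= M.

Definition two_param_contracts (R : realType) (F : numFieldType) (n : nat)
    (Uh Ut : R -> 'M[F]_n) (c c' : 'I_n -> 'I_n -> 'I_n -> F) : Prop :=
  forall i' j' k' : 'I_n,
    transf c (Uh p.1 *m Ut p.2) i' j' k' @[p --> (0^'+, 0^'+)] --> c' i' j' k'.

From HB Require Import structures.
From mathcomp Require Import all_boot all_order all_algebra.
From mathcomp Require Import all_classical all_reals all_analysis.
From mathcomp Require Import complex ring.
Import Order.TTheory GRing.Theory Num.Theory.
Import numFieldNormedType.Exports.
Local Open Scope classical_set_scope.
Local Open Scope ring_scope.

(* The transformation of structure constants is a right action of GL_n, so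
   U_(a,b) = Uh_a Ut_b sends c to the Ut_b-image of Uh_a c = ch + d_a, where
   d_a -> 0 as a -> 0+.  The Ut_b-image of ch tends to ct, and the Ut_b-image
   of d_a is a finite sum of products g(b) d_a with g bounded near 0+, hence
   tends to 0 in the product filter. *)

Lemma invmx_mul (R : comUnitRingType) (n : nat) (A B : 'M[R]_n) :
  A \in unitmx -> B \in unitmx -> invmx (A *m B) = invmx B *m invmx A.
Proof.
move=> uA uB; have uAB : A *m B \in unitmx by rewrite unitmx_mul uA.
rewrite -[RHS]mulmx1 -(mulmxV uAB) !mulmxA -!mulmxA (mulKmx uA) (mulKmx uB).
by [].
Qed.

Section BigSums.
Variables (R : comRingType) (n : nat).

Lemma exchange_big4 (K : 'I_n -> 'I_n -> 'I_n -> 'I_n -> R) :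
  \sum_(a < n) \sum_(b < n) \sum_(c < n) \sum_(x < n) K a b c x =
  \sum_(x < n) \sum_(a < n) \sum_(b < n) \sum_(c < n) K a b c x.
Proof.
under eq_bigr => a _ do under eq_bigr => b _ do rewrite exchange_big.
under eq_bigr => a _ do rewrite exchange_big.
by rewrite exchange_big.
Qed.

Lemma mulr_sum3 (a b d : 'I_n -> R) (c : R) :
  (\sum_(i < n) a i) * (\sum_(j < n) b j) * (\sum_(k < n) d k) * c =
  \sum_(i < n) \sum_(j < n) \sum_(k < n) (a i * b j * d k * c).
Proof.
rewrite !mulr_suml; apply: eq_bigr => i _.
rewrite [a i * _]mulr_sumr !mulr_suml; apply: eq_bigr => j _.
rewrite mulr_sumr mulr_suml; apply: eq_bigr => k _.
ring.
Qed.

End BigSums.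

Section TransfAction.
Variables (F : numFieldType) (n : nat).

Lemma transf_mul (c : 'I_n -> 'I_n -> 'I_n -> F) (A B : 'M[F]_n) i' j' k' :
  A \in unitmx -> B \in unitmx ->
  transf c (A *m B) i' j' k' = transf (transf c A) B i' j' k'.
Proof.
move=> uA uB; rewrite /transf invmx_mul //.
under eq_bigr => i _ do under eq_bigr => j _ do under eq_bigr => k _ do
  rewrite !mxE mulr_sum3.
symmetry; transitivity (\sum_(i < n) \sum_(j < n) \sum_(k < n)
    \sum_(i0 < n) \sum_(j0 < n) \sum_(k0 < n)
    (B i i' * B j j' * invmx B k' k * (A i0 i * A j0 j * invmx A k k0 * c i0 j0 k0))).
  apply: eq_bigr => i _; apply: eq_bigr => j _; apply: eq_bigr => k _.
  rewrite mulr_sumr; apply: eq_bigr => i0 _.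
  by rewrite mulr_sumr; apply: eq_bigr => j0 _; rewrite mulr_sumr.
rewrite exchange_big4; apply: eq_bigr => i _.
rewrite exchange_big4; apply: eq_bigr => j _.
rewrite exchange_big4; apply: eq_bigr => k _.
apply: eq_bigr => x _; apply: eq_bigr => y _; apply: eq_bigr => z _.
ring.
Qed.

Lemma transfD (c d : 'I_n -> 'I_n -> 'I_n -> F) (U : 'M[F]_n) i' j' k' :
  transf (fun i j k => c i j k + d i j k) U i' j' k' =
  transf c U i' j' k' + transf d U i' j' k'.
Proof.
rewrite /transf -big_split; apply: eq_bigr => i _.
rewrite -big_split; apply: eq_bigr => j _.
by rewrite -big_split; apply: eq_bigr => k _; rewrite mulrDr.
Qed.

End TransfAction.

Section Limits.
Variable F : numFieldType.

Lemma cvg_sum0 (T : Type) (G : set_system T) (FG : Filter G) (I : Type)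
    (s : seq I) (f : I -> T -> F) :
  (forall i, f i x @[x --> G] --> 0) -> (\sum_(i <- s) f i x) @[x --> G] --> 0.
Proof.
move=> f0; elim: s => [|a s IHs].
  rewrite (_ : (fun x => _) = fun=> 0); first exact: cvg_cst.
  by apply/funext => x; rewrite big_nil.
rewrite (_ : (fun x => _) = fun x => f a x + \sum_(i <- s) f i x).
  by have := cvgD (f0 a) IHs => /(_ FG); rewrite addr0.
by apply/funext => x; rewrite big_cons.
Qed.

Lemma cvg_bounded_mul0 (T1 T2 : Type) (G1 : set_system T1) (G2 : set_system T2)
    (FG1 : Filter G1) (FG2 : Filter G2) (g : T2 -> F) (h : T1 -> F) :
  (exists M : F, \forall y \near G2, `|g y| <= M) ->
  h x @[x --> G1] --> 0 ->
  g p.2 * h p.1 @[p --> (G1, G2)] --> 0.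
Proof.
move=> [M gM] /cvgr0Pnorm_lt h0; apply/cvgr0Pnorm_lt => e e0.
have M1_gt0 : 0 < `|M| + 1 by rewrite ltr_pwDr // normr_ge0.
exists ([set x | `|h x| < e / (`|M| + 1)], [set y | `|g y| <= M]) => /=.
  by split; [exact: h0 (divr_gt0 e0 M1_gt0) | exact: gM].
move=> [x y] [/= hx gy]; rewrite normrM.
have gy_le : `|g y| <= `|M| + 1.
  have M_ge0 : 0 <= M := le_trans (normr_ge0 _) gy.
  by apply: (le_trans gy); rewrite ger0_norm // lerDl.
apply: (le_lt_trans (ler_wpM2r (normr_ge0 _) gy_le)).
by rewrite -ltr_pdivlMl // mulrC.
Qed.

End Limits.

Lemma near_0plus_itv01 (R : realType) : \forall a \near (0 : R)^'+, 0 < a <= 1.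
Proof.
near=> a; apply/andP; split; first by near: a; exact: nbhs_right_gt.
by apply/ltW; near: a; apply: nbhs_right_lt; exact: ltr01.
Unshelve. all: by end_near.
Qed.

Lemma two_param_contracts_of_bounded (R : realType) (F : numFieldType) (n : nat)
    (Uh Ut : R -> 'M[F]_n) (c ch ct : 'I_n -> 'I_n -> 'I_n -> F) :
  contracts Uh c ch -> contracts Ut ch ct -> g_bounded Ut ->
  two_param_contracts Uh Ut c ct.
Proof.
move=> [_ [Uh_unit c_ch]] [_ [Ut_unit ch_ct]] Ut_bounded i' j' k'.
pose d a i j k := transf c (Uh a) i j k - ch i j k.
have split_transf : \forall p \near ((0 : R)^'+, (0 : R)^'+),
    transf ch (Ut p.2) i' j' k' + transf (d p.1) (Ut p.2) i' j' k' =
    transf c (Uh p.1 *m Ut p.2) i' j' k'.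
  exists ([set a | 0 < a <= 1], [set a | 0 < a <= 1]).
    by split; exact: near_0plus_itv01.
  move=> [a b] [/= a01 b01]; rewrite transf_mul ?Uh_unit ?Ut_unit // -transfD.
  by congr transf; apply/funext => i; apply/funext => j; apply/funext => k;
    rewrite /d addrC subrK.
apply: cvg_trans (near_eq_cvg split_transf) _.
rewrite -[ct i' j' k']addr0; apply: cvgD.
  apply: (cvg_comp snd (fun b => transf ch (Ut b) i' j' k')); last exact: ch_ct.
  exact: (@cvg_snd _ _ ((0 : R)^'+) ((0 : R)^'+) _).
apply: cvg_sum0 => i; apply: cvg_sum0 => j; apply: cvg_sum0 => k.
apply: (@cvg_bounded_mul0 F _ _ _ _ _ _
  (fun b => Ut b i i' * Ut b j j' * invmx (Ut b) k' k) (fun a => d a i j k)).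
  exact: Ut_bounded.
by apply/subr_cvg0; exact: c_ch.
Qed.

Theorem mainTheorem10 (R : realType) :
  (forall (n : nat) (Uh Ut : R -> 'M[R]_n) (c ch ct : 'I_n -> 'I_n -> 'I_n -> R),
      contracts Uh c ch -> contracts Ut ch ct -> g_bounded Ut ->
      two_param_contracts Uh Ut c ct) /\
  (forall (n : nat) (Uh Ut : R -> 'M[R[i]]_n)
          (c ch ct : 'I_n -> 'I_n -> 'I_n -> R[i]),
      contracts Uh c ch -> contracts Ut ch ct -> g_bounded Ut ->
      two_param_contracts Uh Ut c ct).
Proof. by split=> n Uh Ut c ch ct; exact: two_param_contracts_of_bounded. Qed.
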